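(* Let $U$ be a binary operator on $\mathbb{C}^2\otimes\mathbb{C}^2$ written in $2\times2$ blocks as $U=\left[\begin{array}{c|c}U_{11}&U_{12}\\ \hline U_{21}&U_{22}\end{array}\right]$ (each $U_{ij}$ a $2\times2$ matrix, $U=\sum_{a,b\in\{0,1\}}\ket a\bra b\otimes U_{a+1,b+1}$). Let $k\ge2$, $m,n\ge1$ with $m+n\le k$, and let $\rho$ be a density operator on $\otimes^k\mathbb{C}^2$. Then $$\mathrm{Tr}\!\left[\big(I^{(m-1)}\otimes P_1\otimes I^{(n-1)}\otimes P_1\otimes I^{(k-m-n)}\big)\,U_{(k;m,m+n)}\,\rho\,U_{(k;m,m+n)}^{\dagger}\right]=\mathrm{Tr}\!\left[\big(I^{(m-1)}\otimes\Lambda_U^{(n+1)}\otimes I^{(k-m-n)}\big)\rho\right],$$ where $$\Lambda_U^{(n+1)}=\left[\begin{array}{c|c}I^{(n-1)}\otimes(U_{21}^{\dagger}P_1U_{21})&I^{(n-1)}\otimes(U_{21}^{\dagger}P_1U_{22})\\ \hline I^{(n-1)}\otimes(U_{22}^{\dagger}P_1U_{21})&I^{(n-1)}\otimes(U_{22}^{\dagger}P_1U_{22})\end{array}\right].$$ (The left-hand side is the multi-target probability $\texttt{P}[U_{(k;m,m+n)},\rho]$ when the target positions of $U_{(k;m,m+n)}$ are exactly $m$ and $m+n$.)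
   Context: Qubits are vectors in $\mathbb{C}^2$ with computational basis $\ket0,\ket1$; tensor products are Kronecker products. $I^{(j)}$ denotes the identity on $\otimes^j\mathbb{C}^2$, $I^{(0)}=1$. $P_1=\ket1\bra1$. For a binary gate $U$ and $1\le m<m+n\le k$, $U_{(k;m,m+n)}$ denotes the operator on $\otimes^k\mathbb{C}^2$ that applies $U$ to the $m$-th and $(m+n)$-th qubits (the $m$-th as first factor of $U$, the $(m+n)$-th as second) and acts as the identity on the other qubits. In the paper's multi-target quantum computational logic, the probability $\texttt{P}[V,\rho]$ of a gate $V$ on input $\rho$ is $\mathrm{Tr}[(\mathcal P_1\otimes\cdots\otimes\mathcal P_k)V\rho V^\dagger]$ with $\mathcal P_i=P_1$ at target positions (those qubits affected by $V$) and $\mathcal P_i=I$ at the other positions. *)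

(* Qubit operators as square matrices over a
   numClosedFieldType C (e.g. the complex numbers). *)
From HB Require Import structures.
From mathcomp Require Import all_boot all_order all_algebra.
Set Implicit Arguments. Unset Strict Implicit. Unset Printing Implicit Defensive.
Import Order.TTheory GRing.Theory Num.Theory.
Local Open Scope ring_scope.

Lemma kron_hi_proof p q (i : 'I_(p * q)) : (i %/ q < p)%N.
Proof.
have := ltn_ord i; move: (nat_of_ord i) => x; clear i.
case: q => [|q]; first by rewrite muln0.
by move=> H; rewrite ltn_divLR.
Qed.

Lemma kron_lo_proof p q (i : 'I_(p * q)) : (i %% q < q)%N.
Proof.
have := ltn_ord i; move: (nat_of_ord i) => x; clear i.
case: q => [|q]; first by rewrite muln0.
by rewrite ltn_mod.
Qed.

Definition kron_hi p q (i : 'I_(p * q)) : 'I_p := Ordinal (kron_hi_proof i).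
Definition kron_lo p q (i : 'I_(p * q)) : 'I_q := Ordinal (kron_lo_proof i).

Lemma kron_idx_proof p q (x : 'I_p) (y : 'I_q) : (x * q + y < p * q)%N.
Proof.
have Hx := ltn_ord x; have Hy := ltn_ord y.
move: (nat_of_ord x) (nat_of_ord y) Hx Hy => {x y} x y Hx Hy.
apply: (@leq_trans (x * q + q)); first by rewrite ltn_add2l.
by rewrite -mulSnr leq_mul2r Hx orbT.
Qed.

Definition kron_idx p q (x : 'I_p) (y : 'I_q) : 'I_(p * q) := Ordinal (kron_idx_proof x y).

(* Kronecker product A (x) B; the first factor is the most significant. *)
Definition kron (C : nzRingType) p q (A : 'M[C]_p) (B : 'M[C]_q) : 'M[C]_(p * q) :=
  \matrix_(i, j) (A (kron_hi i) (kron_hi j) * B (kron_lo i) (kron_lo j)).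

Definition qkron (C : nzRingType) a b (A : 'M[C]_(2 ^ a)) (B : 'M[C]_(2 ^ b))
  : 'M[C]_(2 ^ (a + b)) :=
  castmx (esym (expnD 2 a b), esym (expnD 2 a b)) (kron A B).
Notation "A \ox B" := (qkron A B) (at level 40, left associativity).

(* view an e-qubit operator as a k-qubit operator (used only when e = k) *)
Definition qcast (C : nzRingType) k e (A : 'M[C]_(2 ^ e)) : 'M[C]_(2 ^ k) :=
  conform_mx (0 : 'M[C]_(2 ^ k)) A.

Definition Iq (C : nzRingType) j : 'M[C]_(2 ^ j) := 1%:M.

Definition ketbra (C : nzRingType) (a b : 'I_2) : 'M[C]_(2 ^ 1) := delta_mx a b.
Definition P1 (C : nzRingType) : 'M[C]_(2 ^ 1) := delta_mx 1 1.

Definition adj (C : numClosedFieldType) m n (A : 'M[C]_(m, n)) : 'M[C]_(n, m) :=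
  (map_mx (fun x => x^*) A)^T.

Definition density (C : numClosedFieldType) d (rho : 'M[C]_d) : Prop :=
  [/\ adj rho = rho,
      (forall v : 'cV[C]_d, 0 <= (adj v *m rho *m v) 0 0)
    & \tr rho = 1].

(* the 2x2 blocks of a binary gate: U = sum_{a,b} |a><b| (x) U_blk a b
   (0-indexed, so U_blk 1 0 is the paper's U_21) *)
Definition U_blk (C : nzRingType) (U : 'M[C]_(2 ^ 2)) (a b : 'I_2) : 'M[C]_(2 ^ 1) :=
  \matrix_(i, j) (U (kron_idx (a : 'I_(2 ^ 1)) i : 'I_(2 ^ 2))
                     (kron_idx (b : 'I_(2 ^ 1)) j : 'I_(2 ^ 2))).

Definition gate2 (C : nzRingType) (U : 'M[C]_(2 ^ 2)) (k m n : nat) : 'M[C]_(2 ^ k) :=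
  \sum_(a < 2) \sum_(b < 2)
    qcast k (Iq C (m - 1) \ox (ketbra C a b \ox (Iq C (n - 1) \ox
              (U_blk U a b \ox Iq C (k - m - n))))).

(* Lambda_U^(n+1) = [ I^(n-1) (x) U_21^+ P1 U_2(b+1) ]_{a,b}
   = sum_{a,b} |a><b| (x) (I^(n-1) (x) (U_21a^+ P1 U_2b))  *)
Definition LambdaU (C : numClosedFieldType) (U : 'M[C]_(2 ^ 2)) (n : nat)
  : 'M[C]_(2 ^ (n + 1)) :=
  \sum_(a < 2) \sum_(b < 2)
    qcast (n + 1) (ketbra C a b \ox
       (Iq C (n - 1) \ox (adj (U_blk U 1 a) *m P1 C *m U_blk U 1 b))).

From HB Require Import structures.
From mathcomp Require Import all_boot all_order all_algebra.
From mathcomp.real_closed Require Import mxtens.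
From mathcomp Require Import zify.
Import Order.TTheory GRing.Theory Num.Theory.
Set Implicit Arguments. Unset Strict Implicit. Unset Printing Implicit Defensive.
Local Open Scope ring_scope.

(* Write m = a + 1, n = b + 1 and k = a + 1 + b + 1 + r.  Every operator in
   sight is then a sum of two-site operators
   [I^(a) (x) X (x) I^(b) (x) Y (x) I^(r)], which multiply and take adjoints
   site by site.  With [U = sum_(x,y) |x><y| (x) U_xy] and
   [P_1 |x><y| = delta_(x,1) |1><y|], conjugating [P_1 (x) P_1] by the gate gives
   [sum_(x,y) |x><y| (x) U_1x^+ P_1 U_1y], which is the embedded Lambda_U; the
   claim then follows from [Tr (A B) = Tr (B A)].  The identity is linear in
   rho. *)

Lemma kron_tensmx (R : nzRingType) p q (A : 'M[R]_p) (B : 'M[R]_q) :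
  kron A B = A *t B.
Proof. by apply/matrixP=> i j; rewrite !mxE; congr (A _ _ * B _ _); apply: val_inj. Qed.

Lemma castmx_mulmx (R : nzRingType) m m' (e : m = m') (A B : 'M[R]_m) :
  castmx (e, e) A *m castmx (e, e) B = castmx (e, e) (A *m B).
Proof. by case: m' / e; rewrite !castmx_id. Qed.

Lemma sum_mulrn_eq (V : nmodType) (I : finType) (j : I) (F : I -> V) :
  \sum_i F i *+ (i == j) = F j.
Proof. by under eq_bigr do rewrite mulrb; rewrite -big_mkcond big_pred1_eq. Qed.

Section QubitTensor.

Variable R : nzRingType.

Lemma qkron_suml a b (I : finType) (F : I -> 'M[R]_(2 ^ a)) (B : 'M[R]_(2 ^ b)) :
  (\sum_i F i) \ox B = \sum_i (F i \ox B).
Proof.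
apply/matrixP=> i j; rewrite /qkron castmxE !mxE summxE mulr_suml summxE.
by apply: eq_bigr=> x _; rewrite castmxE mxE.
Qed.

Lemma qkron_sumr a b (I : finType) (A : 'M[R]_(2 ^ a)) (F : I -> 'M[R]_(2 ^ b)) :
  A \ox (\sum_i F i) = \sum_i (A \ox F i).
Proof.
apply/matrixP=> i j; rewrite /qkron castmxE !mxE summxE mulr_sumr summxE.
by apply: eq_bigr=> x _; rewrite castmxE mxE.
Qed.

Lemma qkron_mulnl a b (A : 'M[R]_(2 ^ a)) (B : 'M[R]_(2 ^ b)) c :
  (A *+ c) \ox B = (A \ox B) *+ c.
Proof. by apply/matrixP=> i j; rewrite /qkron mulmxnE !castmxE !mxE mulmxnE mulrnAl. Qed.

Lemma qkron_mulnr a b (A : 'M[R]_(2 ^ a)) (B : 'M[R]_(2 ^ b)) c :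
  A \ox (B *+ c) = (A \ox B) *+ c.
Proof. by apply/matrixP=> i j; rewrite /qkron mulmxnE !castmxE !mxE mulmxnE mulrnAr. Qed.

Lemma qcast_id k (A : 'M[R]_(2 ^ k)) : qcast k A = A.
Proof. exact: conform_mx_id. Qed.

Lemma qcast_sum k e (I : finType) (F : I -> 'M[R]_(2 ^ e)) :
  qcast k (\sum_i F i) = \sum_i qcast k (F i).
Proof.
rewrite /qcast /conform_mx; case: (2 ^ e =P 2 ^ k)%N => [e_k|_]; last by rewrite big1.
by apply/matrixP=> i j; rewrite castmxE !summxE; apply: eq_bigr=> x _; rewrite castmxE.
Qed.

(* Equality of operators on possibly syntactically different numbers of qubits. *)
Definition qeq e1 e2 (X : 'M[R]_(2 ^ e1)) (Y : 'M[R]_(2 ^ e2)) :=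
  e1 = e2 /\ qcast e2 X = Y.

Lemma qeq_refl e (X : 'M[R]_(2 ^ e)) : qeq X X.
Proof. by split; rewrite ?qcast_id. Qed.

Lemma qeq_sym e1 e2 (X : 'M[R]_(2 ^ e1)) (Y : 'M[R]_(2 ^ e2)) : qeq X Y -> qeq Y X.
Proof. by case=> e; case: e2 / e Y => Y <-; rewrite qcast_id; apply: qeq_refl. Qed.

Lemma qeq_trans e1 e2 e3 (X : 'M[R]_(2 ^ e1)) (Y : 'M[R]_(2 ^ e2)) (Z : 'M[R]_(2 ^ e3)) :
  qeq X Y -> qeq Y Z -> qeq X Z.
Proof.
case=> e; case: e2 / e Y => Y <-; rewrite qcast_id.
by case=> e; case: e3 / e Z => Z <-; rewrite qcast_id; apply: qeq_refl.
Qed.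

Lemma qeq_qcast e k (X : 'M[R]_(2 ^ e)) : e = k -> qeq X (qcast k X).
Proof. by split. Qed.

Lemma qcast_qeq e k (X : 'M[R]_(2 ^ e)) (Y : 'M[R]_(2 ^ k)) : qeq X Y -> qcast k X = Y.
Proof. by case. Qed.

Lemma qeq_qkronl e1 e2 b (X : 'M[R]_(2 ^ e1)) (Y : 'M[R]_(2 ^ e2)) (B : 'M[R]_(2 ^ b)) :
  qeq X Y -> qeq (X \ox B) (Y \ox B).
Proof. by case=> e; case: e2 / e Y => Y <-; rewrite qcast_id; apply: qeq_refl. Qed.

Lemma qeq_qkronr e1 e2 b (X : 'M[R]_(2 ^ e1)) (Y : 'M[R]_(2 ^ e2)) (B : 'M[R]_(2 ^ b)) :
  qeq X Y -> qeq (B \ox X) (B \ox Y).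
Proof. by case=> e; case: e2 / e Y => Y <-; rewrite qcast_id; apply: qeq_refl. Qed.

Lemma qeq_qkronA a b c (A : 'M[R]_(2 ^ a)) (B : 'M[R]_(2 ^ b)) (D : 'M[R]_(2 ^ c)) :
  qeq ((A \ox B) \ox D) (A \ox (B \ox D)).
Proof.
have e : (2 ^ (a + b + c) = 2 ^ (a + (b + c)))%N by rewrite addnA.
split; first by rewrite addnA.
have -> : qcast (a + (b + c)) ((A \ox B) \ox D) = castmx (e, e) ((A \ox B) \ox D).
  by rewrite /qcast; case: _ / e; rewrite conform_mx_id castmx_id.
apply/matrixP=> i j; rewrite /qkron !(castmxE, mxE) -mulrA.
have hi_hi (x : nat) : (x %/ 2 ^ c %/ 2 ^ b = x %/ 2 ^ (b + c))%N.
  by rewrite -divnMA expnD mulnC.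
have hi_lo (x : nat) : (x %/ 2 ^ c %% 2 ^ b = x %% 2 ^ (b + c) %/ 2 ^ c)%N.
  by rewrite modn_divl expnD.
have lo_lo (x : nat) : (x %% 2 ^ c = x %% 2 ^ (b + c) %% 2 ^ c)%N.
  by rewrite modn_dvdm // expnD dvdn_mull.
by congr (A _ _ * (B _ _ * D _ _)); apply: val_inj; rewrite /= ?hi_hi ?hi_lo -?lo_lo.
Qed.

End QubitTensor.

Lemma qkron_mul (R : comNzRingType) a b (A A' : 'M[R]_(2 ^ a)) (B B' : 'M[R]_(2 ^ b)) :
  (A \ox B) *m (A' \ox B') = (A *m A') \ox (B *m B').
Proof. by rewrite /qkron castmx_mulmx !kron_tensmx tensmx_mul. Qed.

Section Adjoint.

Variable C : numClosedFieldType.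

Lemma adj_qkron a b (A : 'M[C]_(2 ^ a)) (B : 'M[C]_(2 ^ b)) :
  adj (A \ox B) = adj A \ox adj B.
Proof. by apply/matrixP=> i j; rewrite /qkron /adj !(castmxE, mxE) rmorphM. Qed.

Lemma adj_sum m (I : finType) (F : I -> 'M[C]_m) : adj (\sum_i F i) = \sum_i adj (F i).
Proof.
apply/matrixP=> i j; rewrite /adj !(mxE, summxE) rmorph_sum.
by apply: eq_bigr=> x _; rewrite !mxE.
Qed.

Lemma adj_delta_mx m n (i : 'I_m) (j : 'I_n) :
  adj (delta_mx i j : 'M[C]_(m, n)) = delta_mx j i.
Proof. by rewrite /adj map_delta_mx trmx_delta. Qed.

Lemma adj_Iq j : adj (Iq C j) = Iq C j.
Proof. by rewrite /adj /Iq map_scalar_mx rmorph1 tr_scalar_mx. Qed.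

End Adjoint.

Section TwoSites.

Variables (C : numClosedFieldType) (a b r : nat).

Definition site2 (X Y : 'M[C]_(2 ^ 1)) : 'M[C]_(2 ^ (a + (1 + (b + (1 + r))))) :=
  Iq C a \ox (X \ox (Iq C b \ox (Y \ox Iq C r))).

Lemma site2_mul X Y X' Y' : site2 X Y *m site2 X' Y' = site2 (X *m X') (Y *m Y').
Proof. by rewrite /site2 /Iq !qkron_mul !mulmx1. Qed.

Lemma site2_mulnl X Y c : site2 (X *+ c) Y = site2 X Y *+ c.
Proof. by rewrite /site2 qkron_mulnl !qkron_mulnr. Qed.

Lemma adj_site2 X Y : adj (site2 X Y) = site2 (adj X) (adj Y).
Proof. by rewrite /site2 !adj_qkron !adj_Iq. Qed.

Lemma qcast_site2 X M :
  qcast _ (Iq C a \ox (qcast (b.+1 + 1) (X \ox (Iq C b \ox M)) \ox Iq C r)) = site2 X M.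
Proof.
apply: qcast_qeq; apply: qeq_qkronr.
have e : (1 + (b + 1) = b.+1 + 1)%N by rewrite add1n !addn1.
apply: qeq_trans (qeq_qkronl (Iq C r) (qeq_sym (qeq_qcast (X \ox (Iq C b \ox M)) e))) _.
by apply: qeq_trans (qeq_qkronA _ _ _) _; apply: qeq_qkronr; apply: qeq_qkronA.
Qed.

End TwoSites.

Section GateConjugation.

Variables (C : numClosedFieldType) (U : 'M[C]_(2 ^ 2)) (a b r : nat).
Local Notation k := (a + (1 + (b + (1 + r))))%N.
Local Notation site2 := (site2 a b r).

Lemma sites_sub : (k - a.+1 - b.+1 = r)%N.
Proof. lia. Qed.

Lemma gate2E :
  gate2 U k a.+1 b.+1 = \sum_(x < 2) \sum_(y < 2) site2 (ketbra C x y) (U_blk U x y).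
Proof.
rewrite /gate2 sites_sub !subn1 /=.
by apply: eq_bigr=> x _; apply: eq_bigr=> y _; rewrite qcast_id.
Qed.

Lemma projector_siteE :
  qcast k (Iq C (a.+1 - 1) \ox (P1 C \ox (Iq C (b.+1 - 1) \ox
            (P1 C \ox Iq C (k - a.+1 - b.+1))))) = site2 (P1 C) (P1 C).
Proof. by rewrite sites_sub !subn1 /= qcast_id. Qed.

Lemma LambdaU_siteE :
  qcast k (Iq C (a.+1 - 1) \ox (LambdaU U b.+1 \ox Iq C (k - a.+1 - b.+1)))
  = \sum_(x < 2) \sum_(y < 2)
      site2 (ketbra C x y) (adj (U_blk U 1 x) *m P1 C *m U_blk U 1 y).
Proof.
rewrite /LambdaU sites_sub !subn1 /= qkron_suml qkron_sumr qcast_sum.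
apply: eq_bigr=> x _; rewrite qkron_suml qkron_sumr qcast_sum.
by apply: eq_bigr=> y _; rewrite qcast_site2.
Qed.

Lemma projector_gate2 :
  site2 (P1 C) (P1 C) *m gate2 U k a.+1 b.+1
  = \sum_(y < 2) site2 (ketbra C 1 y) (P1 C *m U_blk U 1 y).
Proof.
rewrite gate2E mulmx_sumr.
under eq_bigr do rewrite mulmx_sumr.
under eq_bigr do under eq_bigr do
  rewrite site2_mul /P1 /ketbra mul_delta_mx_cond site2_mulnl eq_sym.
rewrite exchange_big /=; apply: eq_bigr=> y _.
exact: (sum_mulrn_eq 1 (fun x : 'I_2 => site2 (delta_mx 1 y) _)).
Qed.

Lemma gate2_conj_projector :
  adj (gate2 U k a.+1 b.+1) *m site2 (P1 C) (P1 C) *m gate2 U k a.+1 b.+1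
  = \sum_(x < 2) \sum_(y < 2)
      site2 (ketbra C x y) (adj (U_blk U 1 x) *m P1 C *m U_blk U 1 y).
Proof.
rewrite -mulmxA projector_gate2 {1}gate2E adj_sum mulmx_suml.
under eq_bigr do rewrite adj_sum mulmx_suml.
under eq_bigr do under eq_bigr do rewrite mulmx_sumr.
under eq_bigr do under eq_bigr do under eq_bigr do
  rewrite adj_site2 site2_mul /ketbra adj_delta_mx mul_delta_mx_cond site2_mulnl mulmxA.
under eq_bigr do (under eq_bigr do rewrite sumrMnl; rewrite sumrMnl).
by rewrite sum_mulrn_eq.
Qed.

End GateConjugation.

Unset Implicit Arguments.
Theorem theorem8p1 (C : numClosedFieldType) (U : 'M[C]_(2 ^ 2))
    (k m n : nat) (rho : 'M[C]_(2 ^ k)) :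
  (2 <= k)%N -> (1 <= m)%N -> (1 <= n)%N -> (m + n <= k)%N ->
  density rho ->
  \tr (qcast k (Iq C (m - 1) \ox (P1 C \ox (Iq C (n - 1) \ox
                 (P1 C \ox Iq C (k - m - n)))))
       *m gate2 U k m n *m rho *m adj (gate2 U k m n))
  = \tr (qcast k (Iq C (m - 1) \ox (LambdaU U n \ox Iq C (k - m - n))) *m rho).
Proof.
move=> _ m_gt0 n_gt0 mn_le_k _.
case: m m_gt0 mn_le_k => // a _; case: n n_gt0 => // b _ mn_le_k.
have [r def_k] : exists r, k = (a + (1 + (b + (1 + r))))%N.
  by exists (k - a.+1 - b.+1)%N; lia.
subst k.
rewrite projector_siteE LambdaU_siteE -gate2_conj_projector.
by rewrite mxtrace_mulC !mulmxA.
Qed.
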